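(* Let $k\geq 3$ and let $n$ be such that $\frac{n}{k-1}$ is an integer at least $4$. Then $\rho(\mathcal{F}_i)<\rho(\mathcal{F})$ for $i=2,3$.
   Context: Hypergraphs are simple, undirected, $k$-uniform (every edge has exactly $k$ vertices). The adjacency matrix has $(\mathcal{A}_{\mathcal{G}})_{ij}=\sum_{e\in E,\ i,j\in e}\frac{1}{|e|-1}$ for $i\neq j$ and zero diagonal, and $\rho(\mathcal{G})$ is its spectral radius. Let $\mathbb{C}$ be the $k$-uniform 2-hypercycle consisting of two edges $e_1,e_2$ with $e_1\cap e_2=\{v_1,v_2\}$, i.e. $e_i=\{v_1,v_{a(i,1)},\dots,v_{a(i,k-2)},v_2\}$ ($i=1,2$), all listed vertices distinct. Attaching a pendant edge at a vertex $v$ means adding a new edge consisting of $v$ and $k-1$ new vertices. Fix a vertex $\eta\in e_2\setminus\{v_1,v_2\}$. All of the following have order $n$: $\mathcal{F}$ is obtained from $\mathbb{C}$ by attaching $\frac{n}{k-1}-3$ pendant edges at $v_1$ and one pendant edge at $v_2$; $\mathcal{F}_2$ is obtained from $\mathbb{C}$ by attaching $\frac{n}{k-1}-3$ pendant edges at $\eta$ and one pendant edge at $v_1$; $\mathcal{F}_3$ is obtained from $\mathbb{C}$ by attaching $\frac{n}{k-1}-3$ pendant edges at $v_1$ and one pendant edge at $\eta$. *)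

From HB Require Import structures.
From mathcomp Require Import all_boot all_order all_algebra all_field.
Set Implicit Arguments. Unset Strict Implicit. Unset Printing Implicit Defensive.
Import Order.TTheory GRing.Theory Num.Theory.
Local Open Scope ring_scope.

Definition hadj (n : nat) (E : seq {set 'I_n}) : 'M[algC]_n :=
  \matrix_(i, j) (if i == j then 0
                  else \sum_(e <- E | (i \in e) && (j \in e)) ((#|e| - 1)%:R)^-1).

Definition eigvals (n : nat) (A : 'M[algC]_n) : seq algC :=
  sval (closed_field_poly_normal (char_poly A)).

Definition spec_rad (n : nat) (A : 'M[algC]_n) : algC :=
  \big[Num.max/0]_(z <- eigvals A) `|z|.

Definition hrho (n : nat) (E : seq {set 'I_n}) : algC := spec_rad (hadj E).

(* Vertex labelling (n = m(k-1)):
   v1 = 0, v2 = 1,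
   e1 = {0, 1, 2, ..., k-1},  e2 = {0, 1} U {k, ..., 2k-3},
   the j-th pendant edge (j = 0, 1, ...) uses the new vertices
   2k-2 + j(k-1), ..., 2k-2 + (j+1)(k-1) - 1 together with its attachment vertex. *)
Definition e1_edge (n k : nat) : {set 'I_n} := [set i : 'I_n | (i < k)%N].
Definition e2_edge (n k : nat) : {set 'I_n} :=
  [set i : 'I_n | (i < 2)%N || ((k <= i)%N && (i < 2 * k - 2)%N)].
Definition pendant (n k j a : nat) : {set 'I_n} :=
  [set i : 'I_n | (val i == a) ||
     ((2 * k - 2 + j * (k - 1) <= i)%N && (i < 2 * k - 2 + j.+1 * (k - 1))%N)].

(* The 2-hypercycle C with n/(k-1) - 3 pendant edges attached at vertex a
   and one pendant edge attached at vertex b. *)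
Definition hyp (n k a b : nat) : seq {set 'I_n} :=
  [:: e1_edge n k, e2_edge n k & 
      [seq pendant n k j a | j <- iota 0 (n %/ (k - 1) - 3)]
      ++ [:: pendant n k (n %/ (k - 1) - 3) b]].

Definition hF  (n k : nat) := hyp n k 0 1.
Definition hF2 (n k eta : nat) := hyp n k eta 0.
Definition hF3 (n k eta : nat) := hyp n k 0 eta.

From HB Require Import structures.
From mathcomp Require Import all_boot all_order all_algebra all_field.
From mathcomp Require Import perm ring zify.
Import Order.TTheory GRing.Theory Num.Theory.
Local Open Scope ring_scope.
Set Implicit Arguments. Unset Strict Implicit. Unset Printing Implicit Defensive.

(* Since F2 and F3 are connected, their adjacency matrices have positive
   Perron vectors z.  Moving edges from a vertex v to a vertex u with
   z v <= z u does not decrease the Rayleigh quotient of z and breaks the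
   eigen-equation at u, so it strictly increases the spectral radius.  If
   z eta <= z v2, moving the pendant edges at eta to v2 turns F3 into F and F2
   into a relabelling of F; otherwise moving e1 from v2 to eta turns both into
   relabellings of F, and relabelling preserves the spectrum. *)

Lemma bigmax_norm_spec (s : seq algC) (M := \big[Num.max/0]_(z <- s) `|z|) :
  [/\ 0 <= M, {in s, forall z, `|z| <= M} &
      s != [::] -> exists2 z, z \in s & M = `|z|].
Proof.
rewrite {}/M; elim: s => [|a s [M0 Mge Matt]]; first by rewrite big_nil.
rewrite big_cons; set M := \big[_/_]_(_ <- _) _ in M0 Mge Matt *.
have Mr : M \is Num.real by apply: ger0_real.
rewrite /Num.max; case: ifPn => [aM|]; last rewrite -real_leNgt ?normr_real //.
  have sn0 : s != [::].
    by apply: contraTneq aM => s0; rewrite /M s0 big_nil -real_leNgt ?normr_ge0.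
  split=> //; last by have [z zs ->] := Matt sn0; exists z; rewrite // inE zs orbT.
  by move=> x; rewrite inE => /orP[/eqP->|/Mge]; first exact: ltW.
move=> Ma; split=> //; last by exists a; rewrite ?mem_head.
by move=> x; rewrite inE => /orP[/eqP->//|/Mge/le_trans]; apply.
Qed.

Section SpectralRadius.
Variable n : nat.
Implicit Types A : 'M[algC]_n.

Lemma eigvalsE A z : (z \in eigvals A) = root (char_poly A) z.
Proof.
rewrite /eigvals; case: (closed_field_poly_normal _) => r /= Hr.
by rewrite [in RHS]Hr (monicP (char_poly_monic A)) scale1r root_prod_XsubC.
Qed.

Lemma size_eigvals A : size (eigvals A) = n.
Proof.
rewrite /eigvals; case: (closed_field_poly_normal _) => r /= Hr.
have := size_char_poly A; rewrite Hr (monicP (char_poly_monic A)) scale1r.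
by rewrite size_prod_XsubC => -[].
Qed.

Lemma spec_rad_ge0 A : 0 <= spec_rad A.
Proof. by case: (bigmax_norm_spec (eigvals A)). Qed.

Lemma eigval_norm_le_spec_rad A z : z \in eigvals A -> `|z| <= spec_rad A.
Proof. by case: (bigmax_norm_spec (eigvals A)) => _ + _; apply. Qed.

Lemma spec_rad_attained A : (0 < n)%N ->
  exists2 z, z \in eigvals A & spec_rad A = `|z|.
Proof.
move=> n0; case: (bigmax_norm_spec (eigvals A)) => _ _; apply.
by rewrite -size_eq0 size_eigvals -lt0n.
Qed.

End SpectralRadius.

Definition mxapply n (A : 'M[algC]_n) (z : 'I_n -> algC) i := \sum_j A i j * z j.
Definition qform n (A : 'M[algC]_n) (z : 'I_n -> algC) := \sum_i z i * mxapply A z i.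
Definition sqnorm n (z : 'I_n -> algC) := \sum_i z i ^+ 2.

Lemma sum_delta n (i : 'I_n) (f : 'I_n -> algC) : \sum_l (l == i)%:R * f l = f i.
Proof.
by rewrite (bigD1 i) //= eqxx mul1r big1 ?addr0 // => l /negPf ->; rewrite mul0r.
Qed.

Lemma sqnorm_perturb n (z : 'I_n -> algC) i e :
  sqnorm (fun l => z l + (l == i)%:R * e) = sqnorm z + 2 * e * z i + e ^+ 2.
Proof.
rewrite /sqnorm (eq_bigr (fun l => z l ^+ 2 + (l == i)%:R * (2 * e * z l + e ^+ 2))).
  by rewrite big_split /= sum_delta addrA.
by move=> l _; case: (l == i); rewrite /= ?mul1r ?mul0r; ring.
Qed.

Lemma qform_eigvec n (A : 'M[algC]_n) z r :
  (forall i, mxapply A z i = r * z i) -> qform A z = r * sqnorm z.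
Proof.
by move=> z_eig; rewrite /qform big_distrr; apply: eq_bigr => i _; rewrite z_eig mulrCA.
Qed.

Section RealSymmetric.
Local Open Scope sesquilinear_scope.
Variables (n : nat) (A : 'M[algC]_n).
Hypothesis A_sym : forall i j, A i j = A j i.
Hypothesis A_real : forall i j, A i j \is Num.real.

Local Notation rho := (spec_rad A).

Lemma realsym_adjoint : A ^t* = A.
Proof. by apply/matrixP => i j; rewrite !mxE (CrealP (A_real _ _)) A_sym. Qed.

Let A_normal : A \is normalmx.
Proof. by apply/normalmxP; rewrite realsym_adjoint. Qed.

Lemma spectral_diag_eigval j : spectral_diag A 0 j \in eigvals A.
Proof.
have PU := spectral_unitarymx A.
set P := spectralmx A in PU *; set d := spectral_diag A.
rewrite eigvalsE -eigenvalue_root_char; apply/eigenvalueP; exists (row j P).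
  have PA : P *m A = diag_mx d *m P.
    by rewrite {1}(orthomx_spectralP A_normal) invmx_unitary // !mulmxA
               (unitarymxP PU) mul1mx.
  by rewrite -row_mul PA mul_diag_mx; apply/rowP => l; rewrite !mxE.
apply/eqP => rj0; have := congr1 (row j) (unitarymxP PU).
rewrite row_mul rj0 mul0mx => /rowP/(_ j); rewrite !mxE eqxx /=.
by move/eqP; rewrite eq_sym oner_eq0.
Qed.

(* Rayleigh: diagonalise [A = P^* diag(d) P] and bound each [d_j] by [rho]. *)
Lemma qform_le_spec_rad z : (forall i, z i \is Num.real) ->
  qform A z <= rho * sqnorm z.
Proof.
move=> zr.
have PU := spectral_unitarymx A.
set P := spectralmx A in PU *; set d := spectral_diag A.
have AE : A = P ^t* *m diag_mx d *m P.
  by rewrite {1}(orthomx_spectralP A_normal) invmx_unitary.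
have dr j : d 0 j \is Num.real.
  have : d \is a realmx.
    apply: hermitian_spectral_diag_real.
    by rewrite qualifE /= expr0 scale1r realsym_adjoint.
  by move/mxOverP => /(_ 0 j).
pose x : 'rV_n := \row_i z i.
have xc : x ^t* = x ^T by apply/matrixP => i j; rewrite !mxE (CrealP (zr _)).
pose u := x *m P ^t*.
have uc : u ^t* = P *m x ^t* by rewrite /u trmx_mul map_mxM trmxCK.
have -> : qform A z = (u *m diag_mx d *m u ^t*) 0 0.
  rewrite uc /u (_ : _ *m _ *m (P *m _) = x *m A *m x ^t*); last by rewrite AE !mulmxA.
  rewrite xc !mxE.
  apply: eq_bigr => i _; rewrite [RHS]mulrC !mxE; congr (_ * _).
  by apply: eq_bigr => j _; rewrite !mxE A_sym mulrC.
have -> : sqnorm z = (u *m u ^t*) 0 0.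
  rewrite uc /u (_ : _ *m (P *m _) = x *m x ^t*); last by rewrite mulmxA (mulmxKtV _ PU).
  rewrite xc !mxE.
  by apply: eq_bigr => i _; rewrite !mxE expr2.
rewrite !mxE big_distrr /=; apply: ler_sum => j _.
rewrite mul_mx_diag !mxE mulrAC [_ * d 0 j]mulrC -normCK.
apply: ler_wpM2r; first exact: exprn_ge0.
exact: le_trans (real_ler_norm (dr j)) (eigval_norm_le_spec_rad (spectral_diag_eigval j)).
Qed.

Hypothesis A_diag0 : forall i, A i i = 0.

Lemma qform_perturb z i e :
  qform A (fun l => z l + (l == i)%:R * e) = qform A z + 2 * e * mxapply A z i.
Proof.
have Ax l : mxapply A (fun l => z l + (l == i)%:R * e) l = mxapply A z l + e * A l i.
  rewrite /mxapply; under eq_bigr do rewrite mulrDr.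
  rewrite big_split /=; congr (_ + _).
  by under eq_bigr do rewrite mulrCA; rewrite sum_delta mulrC.
rewrite /qform; under eq_bigr do rewrite Ax.
rewrite (eq_bigr (fun l => z l * mxapply A z l + e * (z l * A l i) +
    (l == i)%:R * (e * mxapply A z l + e * e * A l i))); last first.
  by move=> l _; case: (l == i); rewrite /= ?mul1r ?mul0r; ring.
rewrite !big_split /= sum_delta A_diag0 -big_distrr /=.
have -> : \sum_l z l * A l i = mxapply A z i.
  by apply: eq_bigr => l _; rewrite A_sym mulrC.
ring.
Qed.

(* Perturb [z] at [i] by [e := c / (rho + 1)], where [c] is the defect of the
   eigen-equation at [i]; Rayleigh then forces [0 <= - (rho + 2) e^2]. *)
Lemma qform_eq_spec_rad_eigvec z : (forall i, z i \is Num.real) ->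
  rho * sqnorm z <= qform A z -> forall i, mxapply A z i = rho * z i.
Proof.
move=> zr Hz i.
have r0 : 0 <= rho := spec_rad_ge0 A.
have rr : rho \is Num.real := ger0_real r0.
have avr : mxapply A z i \is Num.real by apply: rpred_sum => j _; apply: rpredM.
set c := mxapply A z i - rho * z i.
have r1 : rho + 1 != 0 by rewrite gt_eqF // ltr_wpDl.
set e := c / (rho + 1).
have cr : c \is Num.real by rewrite rpredB // rpredM.
have er : e \is Num.real by rewrite /e rpredM // rpredV rpredD // rpred1.
have xr l : z l + (l == i)%:R * e \is Num.real by rewrite rpredD // rpredM // rpred_nat.
have : 0 <= - ((rho + 2) * e ^+ 2).
  have Aze : mxapply A z i = e * (rho + 1) + rho * z i.
    by rewrite /e mulfVK // /c subrK.
  have := qform_le_spec_rad xr; rewrite qform_perturb sqnorm_perturb -subr_ge0.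
  move=> /le_trans; apply; rewrite -subr_ge0.
  by rewrite [X in 0 <= X](_ : _ = qform A z - rho * sqnorm z) ?subr_ge0 // Aze; ring.
rewrite oppr_ge0 pmulr_rle0 ?ltr_wpDl // => e2.
have : e ^+ 2 == 0 by rewrite eq_le e2 real_exprn_even_ge0.
by rewrite expf_eq0 /= mulf_eq0 invr_eq0 (negPf r1) orbF subr_eq0 => /eqP.
Qed.

Lemma nonneg_eigvec_spec_rad : (forall i j, 0 <= A i j) -> (0 < n)%N ->
  exists z : 'I_n -> algC,
  [/\ forall i, 0 <= z i, exists i, z i != 0 & forall i, mxapply A z i = rho * z i].
Proof.
move=> A_ge0 n0; have [l lE rl] := spec_rad_attained A n0.
move: lE; rewrite eigvalsE -eigenvalue_root_char => /eigenvalueP [v vA v0].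
pose z i := `|v 0 i|.
have [i vi] : exists i, v 0 i != 0.
  apply/existsP; apply: contraR v0 => /existsPn H.
  by apply/eqP/rowP => i; rewrite mxE; apply/eqP; have := H i; rewrite negbK.
exists z; split; first by move=> j; apply: normr_ge0.
  by exists i; rewrite normr_eq0.
apply: qform_eq_spec_rad_eigvec => [j|]; first exact: normr_real.
have N0 : 0 <= \sum_i v 0 i * (v 0 i)^*.
  by apply: sumr_ge0 => j _; rewrite -normCK exprn_ge0.
have -> : rho * sqnorm z = `|l * \sum_i v 0 i * (v 0 i)^*|.
  rewrite normrM (ger0_norm N0) rl; congr (_ * _).
  by apply: eq_bigr => j _; rewrite normCK.
have -> : l * \sum_i v 0 i * (v 0 i)^* = \sum_i (\sum_j v 0 j * A j i) * (v 0 i)^*.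
  rewrite big_distrr /=; apply: eq_bigr => j _.
  by have := congr1 (fun M : 'rV_n => M 0 j) vA; rewrite !mxE => ->; rewrite mulrA.
apply: le_trans (ler_norm_sum _ _ _) _; apply: ler_sum => j _.
rewrite normrM norm_conjC mulrC; apply: ler_wpM2l; first exact: normr_ge0.
apply: le_trans (ler_norm_sum _ _ _) _; apply: ler_sum => m _.
by rewrite normrM A_sym mulrC ger0_norm.
Qed.

Lemma spec_rad_gt_of_not_eigvec (r : algC) y : r \is Num.real ->
  (forall i, y i \is Num.real) -> 0 < sqnorm y -> r * sqnorm y <= qform A y ->
  (exists i, mxapply A y i != r * y i) -> r < rho.
Proof.
move=> rr yr y_gt0 Hy [i Hi].
have r_le : r <= rho by rewrite -(ler_pM2r y_gt0) (le_trans Hy) ?qform_le_spec_rad.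
rewrite lt_neqAle r_le andbT; apply: contraNneq Hi => r_rho.
by rewrite r_rho qform_eq_spec_rad_eigvec // -r_rho.
Qed.

End RealSymmetric.

Lemma char_poly_perm_conj n (s : 'S_n) (A : 'M[algC]_n) :
  char_poly (row_perm s (col_perm s A)) = char_poly A.
Proof.
rewrite /char_poly (_ : char_poly_mx _ = row_perm s (col_perm s (char_poly_mx A))).
  2: by apply/matrixP => i j; rewrite !mxE (inj_eq perm_inj).
rewrite row_permE col_permE !det_mulmx !det_perm odd_permV.
by rewrite mulrCA -signr_addb addbb mulr1.
Qed.

Definition edge_move (T : finType) (v u : T) (e : {set T}) := u |: (e :\ v).

Section EdgeMove.
Variables (T : finType) (v u : T) (e : {set T}).
Hypotheses (ve : v \in e) (ue : u \notin e).

Lemma card_edge_move : #|edge_move v u e| = #|e|.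
Proof. by rewrite cardsU1 in_setD1 (negPf ue) andbF (cardsD1 v e) ve. Qed.

Lemma sum_edge_move (f : T -> algC) :
  \sum_(i in edge_move v u e) f i = \sum_(i in e) f i - f v + f u.
Proof.
rewrite big_setU1 ?in_setD1 ?(negPf ue) ?andbF //= (big_setD1 v ve) /=.
by rewrite [f v + _]addrC addrK addrC.
Qed.

End EdgeMove.

Lemma preimset_tperm_id (T : finType) (x y : T) (A : {set T}) :
  (x \in A) = (y \in A) -> tperm x y @^-1: A = A.
Proof. by move=> xyA; apply/setP => i; rewrite inE; case: tpermP => // ->. Qed.

Lemma preimset_tperm_move (T : finType) (x y : T) (A : {set T}) :
  x \in A -> y \notin A -> tperm x y @^-1: A = edge_move x y A.
Proof.
move=> xA yA; apply/setP => i; rewrite !inE.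
have yx : (y == x) = false by apply: contraNF yA => /eqP->.
case: tpermP => [->|->|/eqP ix /eqP iy]; rewrite ?eqxx ?yx ?(negPf yA) ?xA //=.
  by rewrite eq_sym yx.
by rewrite (negPf ix) (negPf iy).
Qed.

Section Hypergraph.
Variable n : nat.
Implicit Types (E : seq {set 'I_n}) (e : {set 'I_n}) (z : 'I_n -> algC).

Definition edge_weight e : algC := (#|e| - 1)%:R^-1.
Definition edge_sum z e := \sum_(i in e) z i.
Definition edge_form z e :=
  edge_weight e * (edge_sum z e ^+ 2 - \sum_(i in e) z i ^+ 2).

Lemma edge_weight_ge0 e : 0 <= edge_weight e.
Proof. by rewrite invr_ge0 ler0n. Qed.

Lemma edge_weight_gt0 e : (1 < #|e|)%N -> 0 < edge_weight e.
Proof. by move=> e_gt1; rewrite invr_gt0 ltr0n subn_gt0. Qed.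

Lemma hadj_sym E i j : hadj E i j = hadj E j i.
Proof.
by rewrite !mxE eq_sym; case: eqP => // _; apply: eq_bigl => e; rewrite andbC.
Qed.

Lemma hadj_ge0 E i j : 0 <= hadj E i j.
Proof.
by rewrite mxE; case: eqP => // _; apply: sumr_ge0 => e _; apply: edge_weight_ge0.
Qed.

Lemma hadj_real E i j : hadj E i j \is Num.real.
Proof. exact/ger0_real/hadj_ge0. Qed.

Lemma hadj_diag0 E i : hadj E i i = 0.
Proof. by rewrite mxE eqxx. Qed.

Lemma mxapply_hadj E z i :
  mxapply (hadj E) z i = \sum_(e <- E | i \in e) edge_weight e * (edge_sum z e - z i).
Proof.
rewrite /mxapply (eq_bigr (fun j => \sum_(e <- E | i \in e)
    ((j \in e) && (j != i))%:R * edge_weight e * z j)); last first.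
  move=> j _; rewrite mxE eq_sym; case: eqP => [->|_].
    by rewrite mul0r big1 // => e _; rewrite andbF !mul0r.
  rewrite big_distrl /= big_mkcondr /=; apply: eq_bigr => e _.
  by rewrite andbT; case: (j \in e); rewrite ?mul1r ?mul0r.
rewrite exchange_big /=; apply: eq_bigr => e ie.
rewrite /edge_sum (bigD1 i ie) /= addrC addrK big_distrr /= big_mkcond /=.
by rewrite [RHS]big_mkcond; apply: eq_bigr => j _; rewrite andbC; case: eqP;
  case: (j \in e); rewrite /= ?mul1r ?mul0r ?mulr0 ?mulrA.
Qed.

Lemma qform_hadj E z : qform (hadj E) z = \sum_(e <- E) edge_form z e.
Proof.
rewrite /qform; under eq_bigr do rewrite mxapply_hadj big_distrr /= big_mkcond /=.
rewrite exchange_big /=; apply: eq_bigr => e _; rewrite /edge_form.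
have -> : edge_sum z e ^+ 2 - \sum_(i in e) z i ^+ 2 =
          \sum_(i in e) z i * (edge_sum z e - z i).
  rewrite expr2 {1}/edge_sum big_distrl /= -sumrB.
  by apply: eq_bigr => i _; rewrite mulrBr mulrC expr2.
rewrite big_distrr /= [RHS]big_mkcond /=; apply: eq_bigr => i _.
by case: (i \in e); rewrite ?mulr0 // mulrCA.
Qed.

Definition relabel (s : {perm 'I_n}) E := [seq s @^-1: e | e <- E].

Lemma hadj_relabel s E : hadj (relabel s E) = row_perm s (col_perm s (hadj E)).
Proof.
apply/matrixP => i j; rewrite !mxE (inj_eq perm_inj) big_map.
case: eqP => // _; apply: eq_big => [e|e _]; first by rewrite !inE.
by rewrite /edge_weight card_preimset //; apply: perm_inj.
Qed.

Lemma hrho_relabel s E : hrho (relabel s E) = hrho E.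
Proof. by rewrite /hrho /spec_rad /eigvals hadj_relabel char_poly_perm_conj. Qed.

Definition hadjacent E : rel 'I_n := fun i j => has (fun e => (i \in e) && (j \in e)) E.
Definition hconnected E := forall i j, connect (hadjacent E) i j.

Lemma hadjacent_sym E : symmetric (hadjacent E).
Proof. by move=> i j; apply: eq_has => e; rewrite andbC. Qed.

Section NonnegEigvec.
Variables (E : seq {set 'I_n}) (z : 'I_n -> algC) (r : algC).
Hypothesis z_ge0 : forall i, 0 <= z i.
Hypothesis z_eig : forall i, mxapply (hadj E) z i = r * z i.

(* At a zero [z i] the eigen-equation says that the nonnegative terms
   [w(e) * sum_(j in e) z j] vanish; a singleton edge [e] has junk weight
   [w(e) = 1/0 = 0], but then [j = i]. *)
Lemma eigvec_zero_adjacent i j : z i = 0 -> hadjacent E i j -> z j = 0.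
Proof.
move=> zi /hasP[e eE /andP[ie je]].
have /eqP := z_eig i; rewrite zi mulr0 mxapply_hadj psumr_eq0; last first.
  by move=> f _; rewrite zi subr0 mulr_ge0 ?edge_weight_ge0 ?sumr_ge0.
move/allP/(_ e eE); rewrite ie zi subr0 /= mulf_eq0.
have [e_gt1|e_le1] := ltnP 1 #|e|; last first.
  by move=> _; rewrite (card_le1_eqP e_le1 i j ie je).
rewrite (gt_eqF (edge_weight_gt0 e_gt1)) /= => /eqP /psumr_eq0P.
by apply=> // l _; apply: z_ge0.
Qed.

Lemma eigvec_pos : hconnected E -> (exists i, z i != 0) -> forall i, 0 < z i.
Proof.
move=> conE [i0 zi0] i; rewrite lt_def z_ge0 andbT; apply: contra zi0 => /eqP zi.
have closed0 : closed (hadjacent E) [pred l | z l == 0].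
  move=> x y xy; apply/eqP/eqP => [/eigvec_zero_adjacent-> //|].
  by move/eigvec_zero_adjacent; apply; rewrite hadjacent_sym.
by have := closed_connect closed0 (conE i i0); rewrite !inE zi eqxx => <-.
Qed.

End NonnegEigvec.

Lemma perron_vector E : hconnected E -> (0 < n)%N -> exists z : 'I_n -> algC,
  (forall i, 0 < z i) /\ (forall i, mxapply (hadj E) z i = hrho E * z i).
Proof.
move=> conE n0.
have [z [z_ge0 z_neq0 z_eig]] := nonneg_eigvec_spec_rad (@hadj_sym E)
  (@hadj_real E) (@hadj_diag0 E) (@hadj_ge0 E) n0.
by exists z; split => //; apply: eigvec_pos z_ge0 z_eig conE z_neq0.
Qed.

Lemma edge_form_edge_move z v u e : v \in e -> u \notin e ->
  edge_form z (edge_move v u e) =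
  edge_form z e + 2 * edge_weight e * (z u - z v) * (edge_sum z e - z v).
Proof.
move=> ve ue; rewrite /edge_form /edge_sum !sum_edge_move //.
by rewrite /edge_weight card_edge_move //; ring.
Qed.

Lemma edge_sum_sub_gt0 z v e : (forall i, 0 < z i) -> v \in e -> (1 < #|e|)%N ->
  0 < edge_sum z e - z v.
Proof.
move=> z_gt0 ve /card_gt1P[x [y [xe ye xy]]].
have [l le lv] : exists2 l, l \in e & l != v.
  by case: (eqVneq x v) => [xv|]; [exists y; rewrite // -xv eq_sym | exists x].
rewrite /edge_sum (big_setD1 v ve) /= [z v + _]addrC addrK (big_setD1 l) ?inE ?lv //=.
by rewrite ltr_pwDl ?z_gt0 ?sumr_ge0 // => i _; apply/ltW.
Qed.

Section MoveEdges.
Variables (A M B : seq {set 'I_n}) (v u : 'I_n) (z : 'I_n -> algC).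
Hypothesis M_move : {in M, forall e, v \in e /\ u \notin e}.

Local Notation E := (A ++ M ++ B).
Local Notation E' := (A ++ [seq edge_move v u e | e <- M] ++ B).
Local Notation gain := (\sum_(e <- M) edge_weight e * (edge_sum z e - z v)).

Lemma qform_hadj_move_edges :
  qform (hadj E') z = qform (hadj E) z + 2 * (z u - z v) * gain.
Proof.
rewrite !qform_hadj !big_cat big_map /=.
suff -> : \sum_(e <- M) edge_form z (edge_move v u e) =
          \sum_(e <- M) edge_form z e + 2 * (z u - z v) * gain by ring.
rewrite mulr_sumr -big_split /= !big_seq; apply: eq_bigr => e /M_move[ve ue].
by rewrite edge_form_edge_move // mulrA [2 * _ * _]mulrAC.
Qed.

Lemma mxapply_hadj_move_edges : mxapply (hadj E') z u = mxapply (hadj E) z u + gain.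
Proof.
rewrite !mxapply_hadj !big_cat big_map /=.
rewrite [X in _ = _ + (X + _) + _]big1_seq => [|e /andP[ue /M_move[_ /negP //]]].
suff -> : \sum_(e <- M | u \in edge_move v u e)
    edge_weight (edge_move v u e) * (edge_sum z (edge_move v u e) - z u) = gain.
  by rewrite add0r addrA addrAC.
rewrite big_seq_cond [RHS]big_seq; apply: eq_big => [e|e /andP[/M_move[ve ue] _]].
  by rewrite setU11 andbT.
rewrite /edge_weight card_edge_move // /edge_sum sum_edge_move //.
by rewrite -/(edge_weight e) addrK.
Qed.

End MoveEdges.

Lemma hrho_lt_move_edges (A M B : seq {set 'I_n}) (v u : 'I_n) z :
  M != [::] -> {in M, forall e, [/\ v \in e, u \notin e & 1 < #|e|]%N} ->
  (forall i, 0 < z i) ->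
  (forall i, mxapply (hadj (A ++ M ++ B)) z i = hrho (A ++ M ++ B) * z i) ->
  z v <= z u ->
  hrho (A ++ M ++ B) < hrho (A ++ [seq edge_move v u e | e <- M] ++ B).
Proof.
set E := A ++ M ++ B; set E' := A ++ _ ++ B => M0 Mmove z_gt0 z_eig zvu.
have M_move : {in M, forall e, v \in e /\ u \notin e}.
  by move=> e /Mmove[ve ue _].
have gain_gt0 : 0 < \sum_(e <- M) edge_weight e * (edge_sum z e - z v).
  have term_gt0 : {in M, forall e, 0 < edge_weight e * (edge_sum z e - z v)}.
    move=> e /Mmove[ve _ e_gt1].
    by rewrite mulr_gt0 ?edge_weight_gt0 ?edge_sum_sub_gt0.
  have [e eM] : exists e, e \in M by case: (M) M0 => // e M' _; exists e; apply: mem_head.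
  rewrite (big_rem e eM) /= ltr_pwDl ?term_gt0 //.
  by rewrite big_seq sumr_ge0 // => f /mem_rem fM; apply/ltW/term_gt0.
apply: (spec_rad_gt_of_not_eigvec (@hadj_sym E') (@hadj_real E')
  (@hadj_diag0 E') (ger0_real (spec_rad_ge0 (hadj E))) (fun i => gtr0_real (z_gt0 i))).
- rewrite /sqnorm (bigD1 v) //= ltr_pwDl ?exprn_gt0 ?z_gt0 //.
  by rewrite sumr_ge0 // => i _; apply: exprn_ge0; apply/ltW.
- rewrite qform_hadj_move_edges // (qform_eigvec z_eig) lerDl.
  by rewrite mulr_ge0 ?mulr_ge0 ?subr_ge0 // ltW.
- exists u; rewrite mxapply_hadj_move_edges // z_eig gt_eqF //.
  by rewrite -subr_gt0 addrC addKr.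
Qed.

End Hypergraph.

Section TwoHypercycle.
Variables n k : nat.
Hypotheses (k_ge3 : (3 <= k)%N) (k1_dvd_n : (k - 1 %| n)%N)
           (four_le_m : (4 <= n %/ (k - 1))%N).

Local Notation p := (n %/ (k - 1) - 3)%N.
Local Notation e1 := (e1_edge n k).
Local Notation e2 := (e2_edge n k).

(* [hyp n k a b] is [hyp_with e1 e2 a b] by conversion. *)
Definition pendants (a : 'I_n) := [seq pendant n k j a | j <- iota 0 p].
Definition hyp_with (f1 f2 : {set 'I_n}) (a b : 'I_n) :=
  [:: f1, f2 & pendants a ++ [:: pendant n k p b]].

Lemma n_decomp : n = (2 * k - 2 + p.+1 * (k - 1))%N.
Proof.
rewrite {1}(esym (divnK k1_dvd_n)); move: four_le_m; move: (n %/ (k - 1))%N => m.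
nia.
Qed.

Lemma pendant_vertex_lt j : (j <= p)%N -> (2 * k - 2 + j * (k - 1) < n)%N.
Proof. by rewrite [in X in (_ < X)%N]n_decomp; nia. Qed.

Definition pendant_vertex j (jp : (j <= p)%N) : 'I_n :=
  Ordinal (pendant_vertex_lt jp).

Lemma pendant_vertexP j (jp : (j <= p)%N) a : pendant_vertex jp \in pendant n k j a.
Proof. by rewrite inE /=; apply/orP; right; apply/andP; split; nia. Qed.

Lemma pendant_small j a (i : 'I_n) : (i < 2 * k - 2)%N ->
  (i \in pendant n k j a) = (val i == a).
Proof. by move=> i_small; rewrite inE; case: eqP => //= _; apply/negbTE; nia. Qed.

Lemma mem_pendants (i : 'I_n) : (2 * k - 2 <= i)%N ->
  exists2 j, (j <= p)%N & forall a, i \in pendant n k j a.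
Proof.
move=> i_big; exists ((i - (2 * k - 2)) %/ (k - 1))%N.
  rewrite -ltnS ltn_divLR ?subn_gt0 ?ltnS; last by nia.
  by have := ltn_ord i; rewrite [in X in (_ < X)%N -> _]n_decomp; nia.
move=> a; rewrite inE; apply/orP; right.
have k1_gt0 : (0 < k - 1)%N by nia.
have := ltn_pmod (i - (2 * k - 2)) k1_gt0; have := divn_eq (i - (2 * k - 2)) (k - 1).
nia.
Qed.

Section SmallVertices.
Variables (a b : 'I_n).
Hypotheses (a_small : (a < 2 * k - 2)%N) (b_small : (b < 2 * k - 2)%N).

Lemma pendant_edge_move j : a != b -> edge_move a b (pendant n k j a) = pendant n k j b.
Proof.
move=> ab; apply/setP => i; rewrite /edge_move in_setU1 in_setD1.
have [i_small|i_big] := ltnP i (2 * k - 2).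
  rewrite !pendant_small // -[val i == a]/(i == a) -[val i == b]/(i == b).
  by case: (i == a); rewrite ?andbF ?orbF.
have [ia ib] : i != a /\ i != b.
  by split; apply: contraTneq i_big => ->; rewrite -ltnNge.
rewrite (negPf ib) ia !inE -[val i == a]/(i == a) -[val i == b]/(i == b).
by rewrite (negPf ia) (negPf ib).
Qed.

Lemma pendants_edge_move : a != b -> [seq edge_move a b e | e <- pendants a] = pendants b.
Proof.
by move=> ab; rewrite -map_comp; apply: eq_map => j /=; apply: pendant_edge_move.
Qed.

Lemma pendant_preimset_tperm j (c : 'I_n) : (c < 2 * k - 2)%N ->
  tperm a b @^-1: pendant n k j c = pendant n k j (tperm a b c).
Proof.
move=> c_small; apply/setP => i; rewrite inE.
have tperm_eq : (tperm a b i == c) = (i == tperm a b c).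
  by rewrite -(inj_eq (@perm_inj _ (tperm a b))) tpermK.
have [i_small|i_big] := ltnP i (2 * k - 2).
  by rewrite !pendant_small //; case: tpermP.
have big_neq (d : 'I_n) : (d < 2 * k - 2)%N -> (val i == d) = false.
  by move=> d_small; apply: contraTF i_big => /eqP->; rewrite -ltnNge.
have [ai bi] : a != i /\ b != i.
  by split; apply: contraTneq i_big => <-; rewrite -ltnNge.
by rewrite tpermD // !inE !big_neq //; case: tpermP.
Qed.

Lemma relabel_hyp_with f1 f2 (c d : 'I_n) :
  (c < 2 * k - 2)%N -> (d < 2 * k - 2)%N ->
  relabel (tperm a b) (hyp_with f1 f2 c d) =
  hyp_with (tperm a b @^-1: f1) (tperm a b @^-1: f2) (tperm a b c) (tperm a b d).
Proof.
move=> c_small d_small; rewrite /relabel /= map_cat /= pendant_preimset_tperm //.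
by rewrite /pendants -map_comp; congr [:: _, _ & _ ++ _]; apply: eq_map => j /=;
  rewrite pendant_preimset_tperm.
Qed.

End SmallVertices.

Lemma card_pendant_gt1 (a : 'I_n) j : (a < 2 * k - 2)%N -> (j <= p)%N ->
  (1 < #|pendant n k j a|)%N.
Proof.
move=> a_small jp; apply/card_gt1P; exists a, (pendant_vertex jp).
rewrite pendant_vertexP pendant_small // eqxx; split=> //.
by apply: contraTneq a_small => ->; rewrite -leqNgt /=; nia.
Qed.

Lemma v1_lt_n : (0 < n)%N. Proof. by rewrite n_decomp; nia. Qed.
Lemma v2_lt_n : (1 < n)%N. Proof. by rewrite n_decomp; nia. Qed.
Definition v1 : 'I_n := Ordinal v1_lt_n.
Definition v2 : 'I_n := Ordinal v2_lt_n.

Lemma hyp_with_connected (a b : 'I_n) :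
  a \in e2 -> b \in e2 -> hconnected (hyp_with e1 e2 a b).
Proof.
move=> a_e2 b_e2; set E := hyp_with e1 e2 a b.
have link f x y : f \in E -> x \in f -> y \in f -> connect (hadjacent E) x y.
  by move=> fE xf yf; apply/connect1/hasP; exists f; rewrite ?xf.
have v1_e1 : v1 \in e1 by rewrite inE /=; nia.
have v1_e2 : v1 \in e2 by rewrite inE.
have e2E : e2 \in E by rewrite !inE eqxx orbT.
have to_v1 i : connect (hadjacent E) i v1.
  have [i_k|k_i] := ltnP i k; first by apply: (link e1); rewrite // ?mem_head ?inE.
  have [i_s|s_i] := ltnP i (2 * k - 2).
    by apply: (link e2); rewrite // inE k_i i_s orbT.
  have [j jp i_j] := mem_pendants s_i.
  have via (c : 'I_n) f : f \in E -> c \in e2 -> i \in f -> c \in f ->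
      connect (hadjacent E) i v1.
    move=> fE c_e2 i_f c_f.
    exact: connect_trans (link f _ _ fE i_f c_f) (link e2 _ _ e2E c_e2 v1_e2).
  have small_in_pendant (c : 'I_n) l : c \in e2 -> c \in pendant n k l c.
    by rewrite inE => c_e2; rewrite pendant_small ?eqxx //; nia.
  move: i_j; rewrite leq_eqVlt in jp; case/orP: jp => [/eqP-> | j_p] i_j.
    apply: (via b (pendant n k p b)); rewrite ?small_in_pendant //.
    by rewrite !inE mem_cat mem_seq1 eqxx !orbT.
  apply: (via a (pendant n k j a)); rewrite ?small_in_pendant //.
  have jP : pendant n k j a \in pendants a by apply/mapP; exists j; rewrite ?mem_iota.
  by rewrite !inE mem_cat jP !orbT.
move=> i j; apply: connect_trans (to_v1 i) _.
by rewrite (sym_connect_sym (@hadjacent_sym _ E)).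
Qed.

Section MoveEdges.
Variables (f1 f2 : {set 'I_n}) (a b : 'I_n) (z : 'I_n -> algC).
Hypothesis z_gt0 : forall i, 0 < z i.
Hypothesis z_eig :
  forall i, mxapply (hadj (hyp_with f1 f2 a b)) z i = hrho (hyp_with f1 f2 a b) * z i.

Lemma hrho_lt_move_first_edge (v u : 'I_n) :
  v \in f1 -> u \notin f1 -> (1 < #|f1|)%N -> z v <= z u ->
  hrho (hyp_with f1 f2 a b) < hrho (hyp_with (edge_move v u f1) f2 a b).
Proof.
move=> v_f1 u_f1 f1_gt1 zvu.
apply: (@hrho_lt_move_edges _ [::] [:: f1] _ v u z) => // e.
by rewrite inE => /eqP->.
Qed.

Lemma hrho_lt_move_pendants (c : 'I_n) :
  (a < 2 * k - 2)%N -> (c < 2 * k - 2)%N -> a != c -> z a <= z c ->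
  hrho (hyp_with f1 f2 a b) < hrho (hyp_with f1 f2 c b).
Proof.
move=> a_small c_small ac zac.
have := @hrho_lt_move_edges _ [:: f1; f2] (pendants a) [:: pendant n k p b] a c z.
rewrite pendants_edge_move //; apply => //.
  by rewrite -size_eq0 size_map size_iota; nia.
move=> e /mapP[j]; rewrite mem_iota => /andP[_ jp] ->.
rewrite !pendant_small ?eqxx // -[nat_of_ord c == a]/(c == a) eq_sym (negPf ac).
by split=> //; apply: card_pendant_gt1; rewrite // ltnW.
Qed.

Lemma hrho_lt_move_last_pendant (c : 'I_n) :
  (b < 2 * k - 2)%N -> (c < 2 * k - 2)%N -> b != c -> z b <= z c ->
  hrho (hyp_with f1 f2 a b) < hrho (hyp_with f1 f2 a c).
Proof.
move=> b_small c_small bc zbc.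
have := @hrho_lt_move_edges _ (f1 :: f2 :: pendants a) [:: pendant n k p b] [::] b c z.
rewrite /= pendant_edge_move //; apply => // e; rewrite inE => /eqP->.
rewrite !pendant_small ?eqxx // -[nat_of_ord c == b]/(c == b) eq_sym (negPf bc).
by split=> //; apply: card_pendant_gt1.
Qed.

End MoveEdges.

Section Eta.
Variable eta : nat.
Hypotheses (k_le_eta : (k <= eta)%N) (eta_lt : (eta < 2 * k - 2)%N).

Lemma eta_lt_n : (eta < n)%N. Proof. by rewrite n_decomp; nia. Qed.
Definition veta : 'I_n := Ordinal eta_lt_n.

Let v1_small : (v1 < 2 * k - 2)%N. Proof. by rewrite /=; nia. Qed.
Let v2_small : (v2 < 2 * k - 2)%N. Proof. by rewrite /=; nia. Qed.
Let v2_veta : v2 != veta. Proof. by apply/eqP => /(congr1 val) /=; nia. Qed.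
Let v1_veta : v1 != veta. Proof. by apply/eqP => /(congr1 val) /=; nia. Qed.
Let v1_e1 : v1 \in e1. Proof. by rewrite inE /=; nia. Qed.
Let v2_e1 : v2 \in e1. Proof. by rewrite inE /=; nia. Qed.
Let veta_e1 : veta \notin e1. Proof. by rewrite inE /= -leqNgt. Qed.
Let v1_e2 : v1 \in e2. Proof. by rewrite inE. Qed.
Let v2_e2 : v2 \in e2. Proof. by rewrite inE. Qed.
Let veta_e2 : veta \in e2. Proof. by rewrite inE /= k_le_eta eta_lt orbT. Qed.
Let card_e1_gt1 : (1 < #|e1|)%N.
Proof. by apply/card_gt1P; exists v1, v2. Qed.

Local Notation F := (hyp_with e1 e2 v1 v2).

Lemma hrho_swap_v1_v2 : hrho (hyp_with e1 e2 v2 v1) = hrho F.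
Proof.
rewrite -[RHS](hrho_relabel (tperm v1 v2)) relabel_hyp_with // tpermL tpermR.
by rewrite !preimset_tperm_id ?v1_e1 ?v2_e1 ?v1_e2 ?v2_e2.
Qed.

Lemma hrho_swap_v2_veta (a b : 'I_n) : a \in [:: v1; v2] -> b \in [:: v1; v2] ->
  hrho (hyp_with (edge_move v2 veta e1) e2 (tperm v2 veta a) (tperm v2 veta b)) =
  hrho (hyp_with e1 e2 a b).
Proof.
have small12 c : c \in [:: v1; v2] -> (c < 2 * k - 2)%N.
  by rewrite !inE => /orP[] /eqP->.
move=> /small12 a_small /small12 b_small.
rewrite -[RHS](hrho_relabel (tperm v2 veta)) relabel_hyp_with //.
by rewrite preimset_tperm_move // (preimset_tperm_id (A := e2)) ?v2_e2 ?veta_e2.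
Qed.

Let tperm_v2_veta_v1 : tperm v2 veta v1 = v1.
Proof. by rewrite tpermD // eq_sym. Qed.

Lemma hrho_F3_lt_F : hrho (hyp_with e1 e2 v1 veta) < hrho F.
Proof.
have [z [z_gt0 z_eig]] := perron_vector (hyp_with_connected v1_e2 veta_e2) v1_lt_n.
have [zeta_le|zv2_lt] := real_leP (gtr0_real (z_gt0 veta)) (gtr0_real (z_gt0 v2)).
  by apply: hrho_lt_move_last_pendant z_eig _ _ _ _ zeta_le; rewrite // eq_sym.
have := hrho_lt_move_first_edge z_gt0 z_eig v2_e1 veta_e1 card_e1_gt1 (ltW zv2_lt).
rewrite -(hrho_swap_v2_veta (a := v1) (b := v2)) ?inE ?eqxx ?orbT //.
by rewrite tperm_v2_veta_v1 tpermL.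
Qed.

Lemma hrho_F2_lt_F : hrho (hyp_with e1 e2 veta v1) < hrho F.
Proof.
have [z [z_gt0 z_eig]] := perron_vector (hyp_with_connected veta_e2 v1_e2) v1_lt_n.
rewrite -hrho_swap_v1_v2.
have [zeta_le|zv2_lt] := real_leP (gtr0_real (z_gt0 veta)) (gtr0_real (z_gt0 v2)).
  by apply: hrho_lt_move_pendants z_eig _ _ _ _ zeta_le; rewrite // eq_sym.
have := hrho_lt_move_first_edge z_gt0 z_eig v2_e1 veta_e1 card_e1_gt1 (ltW zv2_lt).
rewrite -(hrho_swap_v2_veta (a := v2) (b := v1)) ?inE ?eqxx ?orbT //.
by rewrite tperm_v2_veta_v1 tpermL.
Qed.

End Eta.

End TwoHypercycle.

Theorem lemma3p8 (k n eta : nat) :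
  (3 <= k)%N -> (k - 1 %| n)%N -> (4 <= n %/ (k - 1))%N ->
  (k <= eta)%N -> (eta < 2 * k - 2)%N ->
  hrho (hF2 n k eta) < hrho (hF n k) /\ hrho (hF3 n k eta) < hrho (hF n k).
Proof.
move=> k_ge3 k1_dvd_n four_le_m k_le_eta eta_lt; split.
- exact: (hrho_F2_lt_F k_ge3 k1_dvd_n four_le_m k_le_eta eta_lt).
- exact: (hrho_F3_lt_F k_ge3 k1_dvd_n four_le_m k_le_eta eta_lt).
Qed.
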